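(* Let $T$ be a spherically homogeneous rooted tree in which every vertex has at least $2$ children, and let $G\le\mathrm{Aut}~T$ be a finitely generated branch group which contains a non-trivial element of finite order. Then $G$ does not have property $\mathrm{(LR)}$.
   Context: $\mathrm{Aut}~T$ is the group of automorphisms of $T$ fixing the root; $\mathcal{L}_n$ is the $n$th level; $T_v$ is the subtree of descendants of $v$. For $G\le\mathrm{Aut}~T$, $\mathrm{rist}_G(v)$ is the subgroup of elements of $G$ fixing every vertex outside $T_v$, and $\mathrm{Rist}_G(n)=\prod_{v\in\mathcal{L}_n}\mathrm{rist}_G(v)$. $G$ is level-transitive if it is transitive on each level; $G$ is branch if it is level-transitive and each $\mathrm{Rist}_G(n)$ has finite index in $G$. $H\le G$ is a virtual retract of $G$ if there is a finite-index $K\le G$ containing $H$ and a homomorphism $K\to H$ that is the identity on $H$; $G$ has $\mathrm{(LR)}$ if every finitely generated subgroup is a virtual retract of $G$. *)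

From Stdlib Require List.
From mathcomp Require Import all_boot.
Set Implicit Arguments. Unset Strict Implicit. Unset Printing Implicit Defensive.

(* Spherically homogeneous rooted tree with branching sequence [m]:
   vertices at level n are the sequences [x_0; ...; x_{n-1}] with x_i < m i;
   the root is [::], the parent of v is v with its last letter removed. *)
Definition vertex := seq nat.

Definition valid (m : nat -> nat) (v : vertex) : Prop :=
  forall i, i < size v -> nth 0 v i < m i.

Definition parent (v : vertex) : vertex := take (size v).-1 v.

Fixpoint level (m : nat -> nat) (n : nat) : seq vertex :=
  match n with
  | 0 => [:: [::]]
  | k.+1 => flatten [seq [seq rcons v i | i <- iota 0 (m k)] | v <- level m k]
  end.

(* Tree automorphisms (automatically root-fixing) are represented as functions
   on [vertex] that are the identity outside the tree. *)
Definition afun := vertex -> vertex.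

Definition idf : afun := fun v => v.

Definition is_aut (m : nat -> nat) (f : afun) : Prop :=
  [/\ (forall v, ~ valid m v -> f v = v),
      (forall v, valid m v -> valid m (f v) /\ size (f v) = size v),
      (forall v, valid m v -> f (parent v) = parent (f v))
    & bijective f].

Definition is_subgroup (m : nat -> nat) (G : afun -> Prop) : Prop :=
  [/\ (forall f, G f -> is_aut m f),
      G idf,
      (forall f g, G f -> G g -> G (f \o g))
    & (forall f g, G f -> cancel f g -> cancel g f -> G g)].

Definition subset (H G : afun -> Prop) : Prop := forall f, H f -> G f.

Inductive gen (S : afun -> Prop) : afun -> Prop :=
| gen_id : gen S idf
| gen_mul s f : S s -> gen S f -> gen S (s \o f)
| gen_inv s s' f : S s -> cancel s s' -> cancel s' s -> gen S f -> gen S (s' \o f).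

Definition fin_gen (G : afun -> Prop) : Prop :=
  exists l : seq afun, forall f, G f <-> gen (fun s => List.In s l) f.

Definition finite_index (K G : afun -> Prop) : Prop :=
  exists reps : seq afun, (forall r, List.In r reps -> G r) /\
    forall g, G g -> exists r k, List.In r reps /\ K k /\ g = k \o r.

Definition level_transitive (m : nat -> nat) (G : afun -> Prop) : Prop :=
  forall n v w, List.In v (level m n) -> List.In w (level m n) ->
    exists g, G g /\ g v = w.

Definition rist (m : nat -> nat) (G : afun -> Prop) (v : vertex) : afun -> Prop :=
  fun g => G g /\ forall w, valid m w -> ~~ prefix v w -> g w = w.

Definition Rist (m : nat -> nat) (G : afun -> Prop) (n : nat) : afun -> Prop :=
  fun g => exists h : vertex -> afun,
    (forall v, List.In v (level m n) -> rist m G v (h v)) /\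
    g = foldr (fun v acc => h v \o acc) idf (level m n).

Definition branch (m : nat -> nat) (G : afun -> Prop) : Prop :=
  level_transitive m G /\ forall n, finite_index (Rist m G n) G.

Definition virtual_retract (m : nat -> nat) (H G : afun -> Prop) : Prop :=
  exists (K : afun -> Prop) (phi : afun -> afun),
    [/\ is_subgroup m K, subset K G, subset H K & finite_index K G] /\
    [/\ (forall x, K x -> H (phi x)),
        (forall x y, K x -> K y -> phi (x \o y) = phi x \o phi y)
      & (forall h, H h -> phi h = h)].

Definition LR (m : nat -> nat) (G : afun -> Prop) : Prop :=
  forall l : seq afun, (forall s, List.In s l -> G s) ->
    virtual_retract m (gen (fun s => List.In s l)) G.

From Pilot Require Import Defs.
From mathcomp Require Import all_boot.
From Stdlib Require Import FunctionalExtensionality ClassicalEpsilon Classical_Prop.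
From Stdlib Require List.
Set Implicit Arguments. Unset Strict Implicit. Unset Printing Implicit Defensive.

(* Replace the torsion element by a power gam of prime order p and pick a vertex v
   it moves; then v, gam v, ..., gam^(p-1) v are distinct vertices of one level.
   For a supported in T_v, diag a = prod_(i < p) gam^i a gam^-i acts as a copy of a
   on each T_(gam^i v).  The elements fixing v whose restriction to T_v lies in G
   contain Rist_G(|v|), so by Schreier's lemma they are generated by a finite S; let
   H be generated by gam and the diag (restr v s), s in S.  Then gam is central in H
   and diag a lies in H for every a in rist_G(v).
   If phi : K -> H were a retraction from a finite-index K, then
   phi (gam^i c gam^-i) = phi c, hence diag c = phi (diag c) = (phi c)^p for c in
   K and rist_G(v).  Since a commutes with gam b gam^-1 (disjoint supports),
   phi a and phi b commute, hence so do diag a and diag b, hence so do a and b.  But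
   in a branch group every finite-index subgroup contains two non-commuting elements
   of rist_G(v). *)

Lemma In_mem (T : eqType) (x : T) (s : seq T) : List.In x s <-> x \in s.
Proof.
elim: s => [|y s IH] /=; first by split.
rewrite inE; split.
  by case=> [->|/IH ->]; rewrite ?eqxx ?orbT.
by case/orP=> [/eqP ->|/IH]; [left|right].
Qed.

Lemma In_map_mem (T : Type) (U : eqType) (f : T -> U) x s :
  List.In x s -> f x \in map f s.
Proof. by move=> /(List.in_map f) /In_mem. Qed.

Lemma In_nth (T : Type) (x0 x : T) s :
  List.In x s -> exists2 i, i < size s & nth x0 s i = x.
Proof.
elim: s => [//|y s IH] /= [->|/IH [i hi e]]; first by exists 0.
by exists i.+1.
Qed.

Lemma pigeonhole (M : nat) (P : nat -> nat -> Prop) :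
  (forall j, j <= M -> exists2 i, i < M & P j i) ->
  exists j j' i, [/\ j < j', j' <= M, P j i & P j' i].
Proof.
move=> hP.
have [f hf] : exists f : nat -> nat, forall j, j <= M -> f j < M /\ P j (f j).
  have hex j : exists i, j <= M -> i < M /\ P j i.
    by case: (leqP j M) => [/hP [i hi hji]|_]; [exists i | exists 0].
  by exists (fun j => proj1_sig (constructive_indefinite_description _ (hex j))) => j;
    case: constructive_indefinite_description => i; apply.
have [hu|] := boolP (uniq (map f (iota 0 M.+1))).
  have sub : {subset map f (iota 0 M.+1) <= iota 0 M}.
    move=> i /mapP [j]; rewrite !mem_iota /= !add0n ltnS => hj ->.
    by case: (hf j hj).
  by have := uniq_leq_size hu sub; rewrite size_map !size_iota ltnn.
case/(uniqPn 0) => i [j [hij]]; rewrite size_map size_iota => hj.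
rewrite !(nth_map 0) ?size_iota ?(ltn_trans hij) // !nth_iota ?(ltn_trans hij) //.
rewrite !add0n => e; exists i, j, (f i); split => //.
  by case: (hf i (ltnW (leq_trans hij hj))).
by rewrite e; case: (hf j hj).
Qed.

Section Prefix.
Variable T : eqType.
Implicit Types a b x : seq T.

Lemma eq_prefix_size a b : prefix a b -> size a = size b -> a = b.
Proof. by move=> h hs; move: h; rewrite prefixE hs take_size => /eqP. Qed.

Lemma prefix_total a b x : prefix a x -> prefix b x -> prefix a b || prefix b a.
Proof.
rewrite prefixE => /eqP ha; rewrite prefixE => /eqP hb.
case: (leqP (size a) (size b)) => h.
  by rewrite prefixE -[b in take _ b]hb take_takel // ha eqxx.
by rewrite orbC prefixE -[a in take _ a]ha take_takel ?hb ?eqxx // ltnW.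
Qed.

Lemma prefix_uniq_size a b x :
  prefix a x -> prefix b x -> size a = size b -> a = b.
Proof.
move=> ha hb hs; case/orP: (prefix_total ha hb) => h; first exact: eq_prefix_size.
exact/esym/eq_prefix_size.
Qed.

Lemma prefix_disjoint a b x :
  ~~ prefix a b -> ~~ prefix b a -> prefix a x -> ~~ prefix b x.
Proof.
move=> nab nba ha; apply/negP => hb.
by case/orP: (prefix_total ha hb) => h; [rewrite h in nab | rewrite h in nba].
Qed.

Lemma prefix_nth (d : T) a b i : prefix a b -> i < size a -> nth d a i = nth d b i.
Proof. by case/prefixP=> c -> hi; rewrite nth_cat hi. Qed.

End Prefix.

Section Iterates.
Variables (T : Type) (f : T -> T).

Lemma iter_comm (g : T -> T) k x :
  (forall y, f (g y) = g (f y)) -> iter k f (g x) = g (iter k f x).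
Proof. by move=> fg; elim: k => //= k ->; rewrite fg. Qed.

Lemma iter_mul_fix k d x : iter d f x = x -> iter (k * d) f x = x.
Proof. by move=> hd; rewrite iterM; apply: iter_fix. Qed.

Lemma iter_coprime_fix p d x :
  0 < p -> coprime p d -> iter p f x = x -> iter d f x = x -> f x = x.
Proof.
move=> p_gt0 cpd hp hd; have [a _] := Bezoutl d p_gt0.
rewrite (eqP cpd) => /dvdnP [c e].
by rewrite -[in RHS](iter_mul_fix c hp) -e iterD (iter_mul_fix a hd).
Qed.

Lemma prime_order_power n :
  0 < n -> (forall x, iter n f x = x) -> ~ (forall x, f x = x) ->
  exists k p, [/\ prime p, ~ (forall x, iter k f x = x) & forall x, iter p (iter k f) x = x].
Proof.
move=> + + f_nid; elim/ltn_ind: n => n IH n_gt0 fn.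
have n_gt1 : 1 < n by case: n {IH} n_gt0 fn => [|[|]] // _ f1; case: f_nid.
have p_pr := pdiv_prime n_gt1.
have qp : n %/ pdiv n * pdiv n = n by rewrite divnK // pdiv_dvd.
case: (classic (forall x, iter (n %/ pdiv n) f x = x)) => fq.
  apply: IH fq; first by rewrite ltn_Pdiv // prime_gt1.
  by rewrite divn_gt0 ?pdiv_gt0 // pdiv_leq.
by exists (n %/ pdiv n), (pdiv n); split=> // x; rewrite -iterM mulnC qp.
Qed.

Lemma prime_orbit_inj p x :
  prime p -> (forall y, iter p f y = y) -> f x <> x ->
  forall i j, i < p -> j < p -> iter i f x = iter j f x -> i = j.
Proof.
move=> p_pr fp fx.
suff lt_neq i j : i < j -> j < p -> iter i f x <> iter j f x.
  move=> i j hi hj e; case: (ltngtP i j) => // hij.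
    by case: (lt_neq i j hij hj e).
  by case: (lt_neq j i hij hi (esym e)).
move=> hij hj e; apply: fx; apply: (iter_coprime_fix (p := p) (d := j - i)) => //.
- exact: prime_gt0.
- rewrite prime_coprime // gtnNdvd ?subn_gt0 //.
  exact: leq_ltn_trans (leq_subr i j) hj.
have i_le_j := ltnW hij; have i_le_p := ltnW (ltn_trans hij hj).
rewrite -{1}(fp x) -iterD addnC addnBA // -addnBAC // iterD -e -iterD subnK //.
Qed.

End Iterates.

Lemma valid_take m (w : vertex) k : valid m w -> valid m (take k w).
Proof.
move=> hw i; rewrite size_take ltn_min => /andP [hik hiw].
by rewrite nth_take //; apply: hw.
Qed.

Lemma levelS m n :
  level m n.+1 = [seq rcons v i | v <- level m n, i <- iota 0 (m n)].
Proof. by []. Qed.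

Lemma levelP m n v : v \in level m n <-> size v = n /\ valid m v.
Proof.
elim: n v => [|n IH] v.
  rewrite inE; split; first by move/eqP ->.
  by case=> /size0nil ->.
rewrite levelS; split.
  case/allpairsP=> [[x i] /= [/IH [sx vx] hi ->]].
  split; first by rewrite size_rcons sx.
  move=> j; rewrite size_rcons ltnS leq_eqVlt nth_rcons => /orP [/eqP ->|hj].
    by rewrite ltnn eqxx sx; rewrite mem_iota in hi.
  by rewrite hj; apply: vx.
case/lastP: v => [[]//|x i]; rewrite size_rcons => -[[sx] hv].
have hvx j : j <= size x -> nth 0 (rcons x i) j < m j.
  by move=> hj; apply: hv; rewrite size_rcons ltnS.
apply/allpairsP; exists (x, i); split => //=.
  apply/IH; split=> // j hj.
  by have := hvx j (ltnW hj); rewrite nth_rcons hj.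
by have := hvx _ (leqnn _); rewrite nth_rcons ltnn eqxx mem_iota sx.
Qed.

Lemma uniq_level m n : uniq (level m n).
Proof.
elim: n => [//|n IH]; rewrite levelS allpairs_uniq ?iota_uniq //.
by move=> [x i] [y j] _ _ /= /rcons_inj [-> ->].
Qed.

Lemma size_level_ge_exp2 m n : (forall i, 2 <= m i) -> 2 ^ n <= size (level m n).
Proof.
move=> hm; elim: n => [//|n IH]; rewrite levelS size_allpairs size_iota expnSr.
exact: leq_mul.
Qed.

Definition supported (m : nat -> nat) (f : afun) (u : vertex) : Prop :=
  forall w, valid m w -> ~~ prefix u w -> f w = w.

Section Automorphisms.
Variable m : nat -> nat.
Implicit Types (f g : afun) (u v w : vertex).

Lemma aut_bij f : is_aut m f -> bijective f.
Proof. by case. Qed.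

Lemma aut_inj f : is_aut m f -> injective f.
Proof. by move/aut_bij/bij_inj. Qed.

Lemma aut_outside f v : is_aut m f -> ~ valid m v -> f v = v.
Proof. by case=> h _ _ _; apply: h. Qed.

Lemma aut_valid f v : is_aut m f -> valid m v -> valid m (f v).
Proof. by case=> _ h _ _ /h []. Qed.

Lemma aut_size f v : is_aut m f -> size (f v) = size v.
Proof.
case: (classic (valid m v)) => hv hf; last by rewrite aut_outside.
by case: hf => _ h _ _; case: (h _ hv).
Qed.

Lemma aut_comp f g : is_aut m f -> is_aut m g -> is_aut m (f \o g).
Proof.
move=> [f1 f2 f3 f4] [g1 g2 g3 g4]; split.
- by move=> w hw /=; rewrite g1 // f1.
- by move=> w /g2 [/f2 [hv ->] ->].
- by move=> w hw /=; rewrite g3 // f3 //; case: (g2 w hw).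
- exact: bij_comp.
Qed.

Lemma aut_take f w k : is_aut m f -> valid m w -> f (take k w) = take k (f w).
Proof.
move=> hf hw; have [d] := ubnP (size w - k); elim: d k => // d IH k hk.
case: (leqP (size w) k) => hwk.
  by rewrite !take_oversize ?aut_size.
have hu : size (take k.+1 w) = k.+1 by rewrite size_takel.
have [_ _ hpar _] := hf.
have := hpar _ (valid_take (k := k.+1) hw).
rewrite /parent hu IH; last by rewrite subnS prednK ?subn_gt0 // -ltnS.
by rewrite size_takel ?aut_size //= !take_takel.
Qed.

Lemma aut_prefixE f u w : is_aut m f -> valid m w -> prefix (f u) (f w) = prefix u w.
Proof.
move=> hf hw; rewrite !prefixE aut_size // -aut_take //.
by rewrite (inj_eq (aut_inj hf)).
Qed.

Lemma aut_stab_prefix f v w : is_aut m f -> f v = v -> prefix v w -> prefix v (f w).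
Proof.
move=> hf hv hp; case: (classic (valid m w)) => hw; last by rewrite aut_outside.
by rewrite -{1}hv aut_prefixE.
Qed.

Lemma supported_prefix f u w :
  is_aut m f -> supported m f u -> prefix u w -> prefix u (f w).
Proof.
move=> hf hout hp; case: (classic (valid m w)) => hw; last by rewrite aut_outside.
apply/negP => /negP hn; have := hout _ (aut_valid hf hw) hn.
by move/(aut_inj hf) => e; rewrite e hp in hn.
Qed.

Lemma supported_moved f u z :
  is_aut m f -> supported m f u -> f z <> z -> valid m z /\ prefix u z.
Proof.
move=> hf hout hz; have hvz : valid m z.
  by apply: NNPP => hv; apply: hz; apply: aut_outside.
by split=> //; apply: NNPP => hp; apply: hz; apply: hout => //; apply/negP.
Qed.

Lemma supported_fix f u : is_aut m f -> supported m f u -> f u = u.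
Proof.
move=> hf hout; apply/esym/eq_prefix_size; last by rewrite (aut_size u hf).
exact: supported_prefix (prefix_refl u).
Qed.

Lemma supported_commute f g u u' :
  is_aut m f -> is_aut m g -> supported m f u -> supported m g u' ->
  ~~ prefix u u' -> ~~ prefix u' u -> f \o g = g \o f.
Proof.
move=> hf hg hof hog n1 n2; apply: functional_extensionality => w /=.
case: (classic (valid m w)) => hw; last by rewrite !aut_outside.
have disj := prefix_disjoint n1 n2; have disj' := prefix_disjoint n2 n1.
case: (boolP (prefix u w)) => pu.
  have pfu := supported_prefix hf hof pu.
  by rewrite (hog w hw (disj _ pu)) (hog _ (aut_valid hf hw) (disj _ pfu)).
case: (boolP (prefix u' w)) => pu'.
  have pgu := supported_prefix hg hog pu'.
  by rewrite (hof w hw pu) (hof _ (aut_valid hg hw) (disj' _ pgu)).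
by rewrite (hof w hw pu) (hog w hw pu') (hof w hw pu).
Qed.

Lemma supported_comp f g u : supported m f u -> supported m g u -> supported m (f \o g) u.
Proof. by move=> hf hg w hw hn /=; rewrite hg // hf. Qed.

Lemma supported_ancestor f u w : prefix w u -> supported m f u -> supported m f w.
Proof.
move=> hwu hf x hx hn; apply: hf => //; apply: contra hn.
exact: prefix_trans.
Qed.

Lemma foldr_supported_below (I : eqType) (c : I -> vertex) (h : I -> afun) s i w :
  uniq s -> (forall j, j \in s -> is_aut m (h j) /\ supported m (h j) (c j)) ->
  (forall j z, j \in s -> prefix (c i) z -> prefix (c j) z -> j = i) ->
  prefix (c i) w ->
  foldr (fun j acc => h j \o acc) idf s w = if i \in s then h i w else w.
Proof.
elim: s => [//|j s IH] /= /andP [js uniq_s] hs disj ciw.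
have hs' j' : j' \in s -> is_aut m (h j') /\ supported m (h j') (c j').
  by move=> hj'; apply: hs; rewrite inE hj' orbT.
have disj' j' z : j' \in s -> prefix (c i) z -> prefix (c j') z -> j' = i.
  by move=> hj'; apply: disj; rewrite inE hj' orbT.
rewrite (IH uniq_s hs' disj' ciw) inE; have [->|neq] /= := eqVneq i j.
  by rewrite (negbTE js).
have [ja hjout] := hs j (mem_head j s).
set z := if i \in s then h i w else w.
have ciz : prefix (c i) z.
  by rewrite /z; case: ifP => // /hs' [ia hiout]; apply: supported_prefix ia hiout ciw.
case: (classic (valid m z)) => hz; last exact: aut_outside ja hz.
apply: hjout => //; apply: contra neq => cjz; apply/eqP/esym.
exact: disj (mem_head j s) ciz cjz.
Qed.

Lemma foldr_supported_outside (I : Type) (c : I -> vertex) (h : I -> afun) s w :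
  (forall j, List.In j s -> is_aut m (h j) /\ supported m (h j) (c j) /\ ~~ prefix (c j) w) ->
  foldr (fun j acc => h j \o acc) idf s w = w.
Proof.
elim: s => [//|j s IH] hs /=; rewrite IH => [|j' hj']; last by apply: hs; right.
have [ja [hjout njw]] := hs j (or_introl erefl).
case: (classic (valid m w)) => hw; last exact: aut_outside ja hw.
exact: hjout.
Qed.

End Automorphisms.

(* Only meaningful for bijective [f]; otherwise an arbitrary function. *)
Definition inv (f : afun) : afun :=
  epsilon (inhabits idf) (fun g => cancel f g /\ cancel g f).

Section Inverse.
Variable f : afun.
Hypothesis hf : bijective f.

Lemma inv_spec : cancel f (inv f) /\ cancel (inv f) f.
Proof.
case: hf => g h1 h2.
by apply: (epsilon_spec (inhabits idf) (fun g => cancel f g /\ cancel g f)); exists g.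
Qed.

Lemma invK : cancel f (inv f). Proof. by case: inv_spec. Qed.

Lemma invVK : cancel (inv f) f. Proof. by case: inv_spec. Qed.

Lemma inv_unique g : cancel f g -> g = inv f.
Proof. by move=> fK; apply: functional_extensionality => x; rewrite -{1}(invVK x) fK. Qed.

End Inverse.

Lemma supported_inv m f u : is_aut m f -> supported m f u -> supported m (inv f) u.
Proof.
move=> hf hout w hw hn; have bf := aut_bij hf.
by rewrite -{1}(hout w hw hn) invK.
Qed.

Lemma inv_id : inv idf = idf.
Proof. by apply/esym/inv_unique => //; exists idf. Qed.

Lemma invM f g : bijective f -> bijective g -> inv (f \o g) = inv g \o inv f.
Proof.
move=> bf bg; apply/esym/inv_unique; first exact: bij_comp.
by move=> x /=; rewrite !invK.
Qed.

Section Subgroup.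
Variables (m : nat -> nat) (G : afun -> Prop).
Hypothesis hG : is_subgroup m G.

Lemma sg_aut f : G f -> is_aut m f.
Proof. by case: hG => h _ _ _; apply: h. Qed.

Lemma sg_bij f : G f -> bijective f.
Proof. by move/sg_aut/aut_bij. Qed.

Lemma sg1 : G idf.
Proof. by case: hG. Qed.

Lemma sgM f g : G f -> G g -> G (f \o g).
Proof. by case: hG => _ _ h _; apply: h. Qed.

Lemma sg_cancel f g : G f -> cancel f g -> cancel g f -> G g.
Proof. by case: hG => _ _ _ h; apply: h. Qed.

Lemma sgV f : G f -> G (inv f).
Proof.
by move=> Gf; have bf := sg_bij Gf; apply: (sg_cancel Gf); [apply: invK | apply: invVK].
Qed.

Lemma sgX f n : G f -> G (iter n f).
Proof. by move=> Gf; elim: n => [|n IH]; [apply: sg1 | apply: sgM Gf IH]. Qed.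

Lemma sg_foldr (T : Type) (h : T -> afun) s :
  (forall u, List.In u s -> G (h u)) -> G (foldr (fun u acc => h u \o acc) idf s).
Proof.
elim: s => [|u s IH] hs /=; first exact: sg1.
by apply: sgM; [apply: hs; left | apply: IH => u' hu'; apply: hs; right].
Qed.

Lemma sg_invK f : G f -> cancel f (inv f).
Proof. by move/sg_bij; apply: invK. Qed.

Lemma sg_invVK f : G f -> cancel (inv f) f.
Proof. by move/sg_bij; apply: invVK. Qed.

Lemma rist_conj t e u u' :
  G t -> rist m G u' e -> t u' = u -> rist m G u (t \o e \o inv t).
Proof.
move=> Gt [Ge hout] htu; split; first by apply: sgM (sgM Gt Ge) (sgV Gt).
move=> x hx hn; have hvx : valid m (inv t x) by apply: aut_valid (sg_aut (sgV Gt)) hx.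
rewrite /= hout ?sg_invVK //; apply: contra hn => hp.
by rewrite -htu -(sg_invVK Gt x) (aut_prefixE _ (sg_aut Gt) hvx).
Qed.

End Subgroup.

Section Generated.
Variable S : afun -> Prop.

Lemma genM f g : gen S f -> gen S g -> gen S (f \o g).
Proof.
elim=> [//|s f' hs _ IH|s s' f' hs c1 c2 _ IH] Gg.
  exact: gen_mul hs (IH Gg).
exact: gen_inv hs c1 c2 (IH Gg).
Qed.

Lemma gen_gens s : S s -> gen S s.
Proof. by move=> Ss; apply: gen_mul Ss (gen_id S). Qed.

Lemma gen_min (P : afun -> Prop) :
  P idf -> (forall f g, P f -> P g -> P (f \o g)) ->
  (forall f g, P f -> cancel f g -> cancel g f -> P g) ->
  (forall s, S s -> P s) -> forall f, gen S f -> P f.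
Proof.
move=> P1 PM PV PS f; elim=> [//|s f' hs _ IH|s s' f' hs c1 c2 _ IH].
  exact: PM (PS _ hs) IH.
exact: PM (PV _ _ (PS _ hs) c1 c2) IH.
Qed.

Lemma gen_subgroup m G : is_subgroup m G -> (forall s, S s -> G s) ->
  is_subgroup m (gen S).
Proof.
move=> hG SG; have genG := gen_min (sg1 hG) (sgM hG) (sg_cancel hG) SG.
have genV : forall f, gen S f -> gen S (inv f).
  suff: forall f, gen S f -> gen S f /\ gen S (inv f) by move=> h f /h [].
  apply: (gen_min (P := fun f => gen S f /\ gen S (inv f)))
    => [|f g [Sf Sf'] [Sg Sg']|f g [Sf Sf'] fK gK|s Ss].
  - by rewrite inv_id; split; apply: gen_id.
  - rewrite (invM (sg_bij hG (genG _ Sf)) (sg_bij hG (genG _ Sg))).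
    by split; apply: genM.
  - have bf : bijective f by exists g.
    have bg : bijective g by exists f.
    by rewrite -(inv_unique bg gK) (inv_unique bf fK).
  - split; first exact: gen_gens.
    have bs := sg_bij hG (SG _ Ss).
    exact: gen_inv Ss (invK bs) (invVK bs) (gen_id S).
split=> [f /genG /(sg_aut hG) //|||f g Sf fK gK]; first exact: gen_id.
  exact: genM.
by rewrite (inv_unique (sg_bij hG (genG _ Sf)) fK); apply: genV.
Qed.

Lemma gen_centralize c : (forall s, S s -> c \o s = s \o c) ->
  forall f, gen S f -> c \o f = f \o c.
Proof.
apply: gen_min => // [f g cf cg | f g cf c1 c2].
  by rewrite compA cf -compA cg compA.
apply: functional_extensionality => x /=.
by rewrite -{2}(c2 x) -[c (f (g x))]/((c \o f) (g x)) cf /= c1.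
Qed.

Lemma gen_morph m (P H : afun -> Prop) (phi : afun -> afun) :
  is_subgroup m P -> is_subgroup m H -> phi idf = idf ->
  (forall x y, P x -> P y -> phi (x \o y) = phi x \o phi y) ->
  (forall s, S s -> P s /\ H (phi s)) -> forall f, gen S f -> H (phi f).
Proof.
move=> hP hH phi1 phiM SPH.
suff: forall f, gen S f -> P f /\ H (phi f) by move=> h f /h [].
apply: (gen_min (P := fun f => P f /\ H (phi f))) => [|f g [Pf Hf] [Pg Hg]|f g [Pf Hf] fK gK|//].
- by rewrite phi1; split; [exact: (sg1 hP) | exact: (sg1 hH)].
- by rewrite phiM //; split; [exact: (sgM hP) | exact: (sgM hH)].
have Pg := sg_cancel hP Pf fK gK.
have phiK x y : P x -> P y -> cancel y x -> cancel (phi y) (phi x).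
  move=> Px Py yK w; rewrite -[phi x (phi y w)]/((phi x \o phi y) w) -phiM //.
  have -> : x \o y = idf by apply: functional_extensionality.
  by rewrite phi1.
by split=> //; apply: (sg_cancel hH Hf); apply: phiK.
Qed.

End Generated.

Definition desc (w : vertex) (j : nat) : vertex := w ++ rcons (nseq j 0) 1.

Lemma nth_desc w i j : i <= j -> nth 0 (desc w j) (size w + i) = (i == j).
Proof.
move=> hij; rewrite nth_cat ltnNge leq_addr /= addKn nth_rcons size_nseq.
by case: ltngtP hij => // hlt _; rewrite nth_nseq hlt.
Qed.

Lemma desc_incomparable w j j' : j != j' -> ~~ prefix (desc w j) (desc w j').
Proof.
have size_desc k : size (desc w k) = size w + k.+1.
  by rewrite size_cat size_rcons size_nseq.
move=> hjj'; apply/negP => hp.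
case: (ltngtP j j') hjj' => // hlt _.
  have hi : size w + j < size (desc w j) by rewrite size_desc ltn_add2l.
  have := prefix_nth 0 hp hi.
  by rewrite nth_desc // nth_desc ?(ltnW hlt) // eqxx (ltn_eqF hlt).
have hi : size w + j' < size (desc w j) by rewrite size_desc ltn_add2l ltnS ltnW.
have := prefix_nth 0 hp hi.
by rewrite nth_desc ?(ltnW hlt) // nth_desc // eqxx (ltn_eqF hlt).
Qed.

Lemma desc_valid m w j : (forall i, 2 <= m i) -> valid m w -> valid m (desc w j).
Proof.
move=> hm hw i; rewrite size_cat nth_cat => hi.
case: (ltnP i (size w)) => h; first exact: hw.
have m_gt1 : 1 < m i := hm i.
rewrite nth_rcons size_nseq nth_nseq if_same.
by case: ifP => _; [apply: ltnW | case: eqP => _ //; apply: ltnW].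
Qed.

Section Branch.
Variables (m : nat -> nat) (G : afun -> Prop).
Hypotheses (hm : forall i, 2 <= m i) (hG : is_subgroup m G) (hB : branch m G).

Lemma trivial_subgroup_infinite_index : ~ finite_index (fun g => forall w, g w = w) G.
Proof.
(* Otherwise the 2^M vertices of level M are the images of one vertex under the
   M coset representatives. *)
case=> R [_ hdec]; have [htr _] := hB; set M := size R.
pose v0 : vertex := nseq M 0.
have hv0 : List.In v0 (level m M).
  apply/In_mem/levelP; split=> [|i]; first by rewrite size_nseq.
  by rewrite size_nseq => hi; rewrite nth_nseq hi (leq_trans _ (hm i)).
have sub : {subset level m M <= map (fun r => r v0) R}.
  move=> u /In_mem hu; have [t [Gt <-]] := htr _ _ _ hv0 hu.
  by have [r [k [hr [hk ->]]]] := hdec _ Gt; rewrite /= hk; apply: In_map_mem.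
have := leq_trans (size_level_ge_exp2 M hm) (uniq_leq_size (uniq_level m M) sub).
by rewrite size_map leqNgt ltn_expl.
Qed.

Lemma rist_nontrivial u : valid m u -> exists2 e, rist m G u e & exists z, e z <> z.
Proof.
move=> hu; apply: NNPP => triv; apply: trivial_subgroup_infinite_index.
have [htr hfi] := hB; set N := size u.
have uN : List.In u (level m N) by apply/In_mem/levelP.
have rist_triv u' e z : List.In u' (level m N) -> rist m G u' e -> e z = z.
  move=> hu' he; have [t [Gt tu']] := htr _ _ _ hu' uN.
  apply: NNPP => hz; apply: triv; exists (t \o e \o inv t).
    exact: (rist_conj hG Gt he tu').
  by exists (t z); rewrite /= (sg_invK hG Gt) => /(aut_inj (sg_aut hG Gt)).
have [R [hR hdec]] := hfi N; exists R; split=> // g Gg.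
have [r [k [hr [[h [hh ->]] ->]]]] := hdec _ Gg.
exists r, (foldr (fun v acc => h v \o acc) idf (level m N)); do 2!split=> //.
have : forall v, List.In v (level m N) -> forall z, h v z = z.
  by move=> v hv z; apply: rist_triv hv (hh v hv).
elim: (level m N) => [//|v s IH] hfix z /=.
by rewrite IH => [|v' hv' z']; apply: hfix; [left | right].
Qed.

Lemma rist_mul_inv_moved e e' u u' z :
  rist m G u e -> rist m G u' e' -> ~~ prefix u u' -> ~~ prefix u' u ->
  e z <> z -> (e \o inv e') z <> z.
Proof.
move=> [Ge he] [Ge' he'] n1 n2 hz.
have [hvz uz] := supported_moved (sg_aut hG Ge) he hz.
by rewrite /= (supported_inv (sg_aut hG Ge') he' hvz (prefix_disjoint n1 n2 uz)).
Qed.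

Lemma finite_index_rist_nontrivial K w :
  is_subgroup m K -> Defs.subset K G -> finite_index K G -> valid m w ->
  exists2 c, K c /\ rist m G w c & exists z, c z <> z.
Proof.
move=> hK hKG [R [_ hdec]] hw.
(* Of the size R + 1 nontrivial e_j in rist_G(desc w j), two lie in the same coset
   K r; their quotient lies in K and still moves a vertex below desc w j. *)
pose P j i := exists e k, [/\ rist m G (desc w j) e, exists z, e z <> z, K k
  & e = k \o nth idf R i].
have [j [j' [i [hjj' _ [e [k [he hez Kk ee]]] [e' [k' [he' _ Kk' ee']]]]]]] :
    exists j j' i, [/\ j < j', j' <= size R, P j i & P j' i].
  apply: pigeonhole => j _; have [e he hez] := rist_nontrivial (desc_valid (j := j) hm hw).
  have [r [k [hr [Kk ee]]]] := hdec e he.1.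
  by have [i hi hri] := In_nth idf hr; exists i => //; exists e, k; rewrite hri.
have ce : e \o inv e' = k \o inv k'.
  apply: functional_extensionality => x; rewrite [in LHS]ee /=; congr k.
  apply: (aut_inj (sg_aut hK Kk')); rewrite (sg_invVK hK Kk').
  by rewrite -[k' _]/((k' \o nth idf R i) _) -ee' (sg_invVK hG he'.1).
have below_w j0 : prefix w (desc w j0) by apply: prefix_prefix.
have Kc : K (k \o inv k') by apply: (sgM hK Kk (sgV hK Kk')).
exists (k \o inv k'); first do 2!split => //; first exact: hKG.
  rewrite -ce; apply: supported_comp; first exact: (supported_ancestor (below_w j) he.2).
  exact: (supported_inv (sg_aut hG he'.1) (supported_ancestor (below_w j') he'.2)).
have [z hz] := hez; exists z; rewrite -ce.
by apply: rist_mul_inv_moved he he' _ _ hz; apply: desc_incomparable;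
  rewrite ?(ltn_eqF hjj') // eq_sym (ltn_eqF hjj').
Qed.

Lemma finite_index_rist_noncommuting K v :
  is_subgroup m K -> Defs.subset K G -> finite_index K G -> valid m v ->
  exists a b, [/\ K a /\ rist m G v a, K b /\ rist m G v b & a \o b <> b \o a].
Proof.
move=> hK hKG hfi hv.
have [a [Ka [Ga ha]] [z az]] := finite_index_rist_nontrivial hK hKG hfi hv.
have aa := sg_aut hG Ga; have [hvz vz] := supported_moved aa ha az.
have [b [Kb [Gb hb]] [y hy]] := finite_index_rist_nontrivial hK hKG hfi hvz.
have ba := sg_aut hG Gb; have [hvy zy] := supported_moved ba hb hy.
exists a, b; split=> //; first by split=> //; split=> //; apply: supported_ancestor vz hb.
have nzay : ~~ prefix z (a y).
  apply: contra_notN az => zay; apply: (prefix_uniq_size _ zay (aut_size z aa)).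
  by rewrite (aut_prefixE _ aa hvy).
move/(congr1 (fun f => f y)) => /=; rewrite (hb _ (aut_valid aa hvy) nzay).
by move/(aut_inj aa).
Qed.

End Branch.

Section Schreier.
Variables (m : nat -> nat) (G P : afun -> Prop) (l R : seq afun) (pk pr : afun -> afun).
Hypotheses (hG : is_subgroup m G) (hl : forall f, G f <-> gen (fun s => List.In s l) f)
  (hRG : forall r, List.In r R -> G r)
  (hdec : forall g, G g -> [/\ List.In (pr g) R, P (pk g) & g = pk g \o pr g]).

Lemma gens_in_G s : List.In s l -> G s.
Proof. by move=> hs; apply/hl/gen_gens. Qed.

Lemma schreier_step (S : afun -> Prop) t f r :
  G t -> List.In r R -> S (pk (r \o t)) ->
  (forall r, List.In r R -> exists k r', [/\ gen S k, List.In r' R & r \o f = k \o r']) ->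
  exists k r', [/\ gen S k, List.In r' R & r \o (t \o f) = k \o r'].
Proof.
move=> Gt hr St IH; have [hr1 _ e1] := hdec (sgM hG (hRG hr) Gt).
have [k [r' [Sk hr' e2]]] := IH _ hr1.
exists (pk (r \o t) \o k), r'; split=> //; first exact: gen_mul St Sk.
by rewrite compA {1}e1 -compA e2.
Qed.

Lemma schreier_rewrite (S : afun -> Prop) :
  (forall r s, List.In r R -> List.In s l -> S (pk (r \o s)) /\ S (pk (r \o inv s))) ->
  forall f, gen (fun s => List.In s l) f -> forall r, List.In r R ->
  exists k r', [/\ gen S k, List.In r' R & r \o f = k \o r'].
Proof.
move=> hS f; elim=> [|s f' hs _ IH|s s' f' hs c1 c2 _ IH] r hr.
- by exists idf, r; split=> //; apply: gen_id.
- exact: schreier_step (gens_in_G hs) hr (hS _ _ hr hs).1 IH.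
rewrite (inv_unique (sg_bij hG (gens_in_G hs)) c1).
exact: schreier_step (sgV hG (gens_in_G hs)) hr (hS _ _ hr hs).2 IH.
Qed.

Lemma schreier_generators : is_subgroup m P -> Defs.subset P G ->
  exists S : seq afun, (forall s, List.In s S -> P s) /\
    forall f, P f -> gen (fun s => List.In s S) f.
Proof.
move=> hP hPG.
pose S1 := List.flat_map (fun r =>
  List.flat_map (fun s => [:: pk (r \o s); pk (r \o inv s)]) l) R.
(* The representatives lying in P are added so that the last coset representative
   produced by the rewriting, which lies in P, is itself a generator. *)
pose S2 := List.filter (fun r => excluded_middle_informative (P r)) R.
set S := pk idf :: List.app S1 S2.
have S1P s : List.In s S1 -> P s.
  case/List.in_flat_map => r [hr /List.in_flat_map [t [ht [<-|[<-|[]]]]]].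
  - by case: (hdec (sgM hG (hRG hr) (gens_in_G ht))).
  - by case: (hdec (sgM hG (hRG hr) (sgV hG (gens_in_G ht)))).
have SP s : List.In s S -> P s.
  case=> [<-|/List.in_app_iff [/S1P //|/List.filter_In [_ /sumboolP //]]].
  by case: (hdec (sg1 hG)).
exists S; split=> // f Pf.
have genP := gen_min (sg1 hP) (sgM hP) (sg_cancel hP) SP.
have hS r s : List.In r R -> List.In s l ->
    List.In (pk (r \o s)) S /\ List.In (pk (r \o inv s)) S.
  move=> hr hs; have inS t : List.In t [:: pk (r \o s); pk (r \o inv s)] -> List.In t S.
    move=> ht; right; apply/List.in_app_iff; left.
    by apply/List.in_flat_map; exists r; split=> //; apply/List.in_flat_map; exists s.
  by split; apply: inS; [left | right; left].
have [r0R _ e0] := hdec (sg1 hG).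
have [k [r' [Sk hr' e]]] :=
  schreier_rewrite (S := fun s => List.In s S) hS (proj1 (hl f) (hPG _ Pf)) r0R.
have ef : f = pk idf \o (k \o r') by rewrite -e compA -e0.
have Pr' : P r'.
  have -> : r' = inv k \o (inv (pk idf) \o f).
    apply: functional_extensionality => x.
    by rewrite ef /= (sg_invK hP (SP _ (or_introl erefl))) (sg_invK hP (genP _ Sk)).
  exact: (sgM hP (sgV hP (genP _ Sk)) (sgM hP (sgV hP (SP _ (or_introl erefl))) Pf)).
rewrite ef; apply: genM; first by apply: gen_gens; left.
apply: genM Sk (gen_gens _); right; apply/List.in_app_iff; right.
by apply/List.filter_In; split=> //; apply/sumboolP.
Qed.

End Schreier.

Lemma finite_index_fin_gen m (G P : afun -> Prop) (l : seq afun) :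
  is_subgroup m G -> (forall f, G f <-> gen (fun s => List.In s l) f) ->
  is_subgroup m P -> Defs.subset P G -> finite_index P G ->
  exists S : seq afun, (forall s, List.In s S -> P s) /\
    forall f, P f -> gen (fun s => List.In s S) f.
Proof.
move=> hG hl hP hPG [R [hRG hdec]].
pose Q g (kr : afun * afun) := [/\ List.In kr.2 R, P kr.1 & g = kr.1 \o kr.2].
have dkP g : G g -> Q g (epsilon (inhabits (idf, idf)) (Q g)).
  move=> Gg; apply: epsilon_spec.
  by have [r [k [hr [Pk e]]]] := hdec g Gg; exists (k, r).
exact: (schreier_generators hG hl hRG dkP hP hPG).
Qed.

Lemma prime_order_elt m (G : afun -> Prop) g :
  is_subgroup m G -> G g -> (exists v, g v <> v) ->
  (exists n, 0 < n /\ forall v, iter n g v = v) ->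
  exists gam p v, [/\ G gam, prime p, forall w, iter p gam w = w, valid m v & gam v <> v].
Proof.
move=> hG Gg [v gv] [n [n_gt0 gn]].
have [k [p [p_pr gk_nid gkp]]] := prime_order_power n_gt0 gn (fun h => gv (h v)).
have [w gkw] : exists w, iter k g w <> w.
  by apply: NNPP => h; apply: gk_nid => w; apply: NNPP => hw; apply: h; exists w.
have Ggk := sgX hG k Gg.
exists (iter k g), p, w; split=> //.
by apply: NNPP => hw; apply: gkw; apply: (aut_outside (sg_aut hG Ggk) hw).
Qed.

Definition restr (v : vertex) (x : afun) : afun := fun w => if prefix v w then x w else w.

Definition stab_restr (G : afun -> Prop) (v : vertex) : afun -> Prop :=
  fun x => [/\ G x, x v = v & G (restr v x)].

Section Restriction.
Variables (m : nat -> nat) (G : afun -> Prop) (v : vertex).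
Hypothesis hG : is_subgroup m G.

Lemma restr_id : restr v idf = idf.
Proof. by apply: functional_extensionality => w; rewrite /restr; case: ifP. Qed.

Lemma restrM x y : is_aut m y -> y v = v -> restr v (x \o y) = restr v x \o restr v y.
Proof.
move=> hy hyv; apply: functional_extensionality => w; rewrite /restr /=.
case vw: (prefix v w); last by rewrite vw.
by rewrite (aut_stab_prefix hy hyv vw).
Qed.

Lemma restr_supported x : is_aut m x -> supported m x v -> restr v x = x.
Proof.
move=> hx hout; apply: functional_extensionality => w; rewrite /restr.
case: ifP => // /negbT nvw; case: (classic (valid m w)) => hw.
  by rewrite hout.
by rewrite (aut_outside hx hw).
Qed.

Lemma supported_restr x : supported m (restr v x) v.
Proof. by move=> w _ nw; rewrite /restr (negbTE nw). Qed.

Lemma restr_cancel x g : is_aut m x -> x v = v -> cancel x g ->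
  cancel (restr v x) (restr v g).
Proof.
move=> hx hxv xK w; rewrite /restr; case vw: (prefix v w); last by rewrite vw.
by rewrite (aut_stab_prefix hx hxv vw).
Qed.

Lemma stab_restr_subgroup : is_subgroup m (stab_restr G v).
Proof.
split=> [x [Gx _ _]|||x g [Gx xv Gx'] xK gK]; first exact: (sg_aut hG Gx).
- by split; rewrite ?restr_id //; apply: (sg1 hG).
- move=> x y [Gx xv Gx'] [Gy yv Gy']; split; first exact: (sgM hG Gx Gy).
    by rewrite /= yv xv.
  by rewrite restrM //; [apply: (sgM hG Gx' Gy') | apply: (sg_aut hG Gy)].
have gv : g v = v by rewrite -{1}xv xK.
split; first exact: (sg_cancel hG Gx xK gK).
  exact: gv.
apply: (sg_cancel hG Gx' _ _); apply: restr_cancel => //.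
  exact: (sg_aut hG Gx).
exact: (sg_aut hG (sg_cancel hG Gx xK gK)).
Qed.

Lemma rist_stab_restr x : rist m G v x -> stab_restr G v x /\ restr v x = x.
Proof.
move=> [Gx hx]; have xa := sg_aut hG Gx.
have rx := restr_supported xa hx.
by split=> //; split; rewrite ?rx //; apply: (supported_fix xa hx).
Qed.

Lemma Rist_stab_restr k : valid m v -> Rist m G (size v) k -> stab_restr G v k.
Proof.
move=> hv [h [hh ->]]; set s := level m (size v).
have vs : v \in s by apply/levelP.
have hs u : List.In u s -> size u = size v /\ rist m G u (h u).
  by move=> hu; split; [case: (proj1 (levelP _ _ _) (proj1 (In_mem _ _) hu)) | apply: hh].
have [Gv hvout] : rist m G v (h v) by apply/hh/In_mem.
have hva := sg_aut hG Gv.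
have fold_below w : prefix v w ->
    foldr (fun u acc => h u \o acc) idf s w = if v \in s then h v w else w.
  apply: (foldr_supported_below (c := id) (uniq_level m (size v))).
    by move=> u /In_mem /hs [_ [Gu hu]]; split; [apply: (sg_aut hG Gu) | exact: hu].
  move=> u z /In_mem /hs [su _] vz uz; exact: (prefix_uniq_size uz vz).
split.
- by apply: (sg_foldr hG) => u /hs [_ []].
- by rewrite fold_below ?prefix_refl // vs (supported_fix hva hvout).
have -> : restr v (foldr (fun u acc => h u \o acc) idf s) = h v.
  rewrite -(restr_supported hva hvout); apply: functional_extensionality => w.
  by rewrite /restr; case: ifP => // vw; rewrite fold_below // vs.
exact: Gv.
Qed.

Lemma stab_restr_finite_index : valid m v -> branch m G -> finite_index (stab_restr G v) G.
Proof.
move=> hv [_ hfi]; have [R [hR hdec]] := hfi (size v); exists R; split=> // g Gg.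
have [r [k [hr [hk e]]]] := hdec g Gg.
by exists r, k; split=> //; split=> //; apply: Rist_stab_restr.
Qed.

End Restriction.

(* gam^i a gam^-i, where [iter (p - i) gam] stands for gam^-i since gam^p = 1. *)
Definition conj_pow (gam : afun) (p i : nat) (a : afun) : afun :=
  iter i gam \o a \o iter (p - i) gam.

Definition diag (gam : afun) (p : nat) (a : afun) : afun :=
  foldr (fun i acc => conj_pow gam p i a \o acc) idf (iota 0 p).

Lemma sg_conj_pow m (G : afun -> Prop) gam p i a :
  is_subgroup m G -> G gam -> G a -> G (conj_pow gam p i a).
Proof. by move=> hG Ggam Ga; apply: (sgM hG (sgM hG (sgX hG i Ggam) Ga) (sgX hG _ Ggam)). Qed.

Lemma sg_diag m (G : afun -> Prop) gam p a :
  is_subgroup m G -> G gam -> G a -> G (diag gam p a).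
Proof.
by move=> hG Ggam Ga; apply: (sg_foldr hG) => i _; exact: (sg_conj_pow p i hG Ggam Ga).
Qed.

Definition diag_gens (gam : afun) (p : nat) (v : vertex) (S : seq afun) : seq afun :=
  gam :: List.map (fun s => diag gam p (restr v s)) S.

Section Retraction.
Variables (m : nat -> nat) (K H : afun -> Prop) (phi : afun -> afun) (gam : afun) (p : nat).
Hypotheses (hK : is_subgroup m K) (hH : is_subgroup m H) (hHK : Defs.subset H K)
  (phiH : forall x, K x -> H (phi x))
  (phiM : forall x y, K x -> K y -> phi (x \o y) = phi x \o phi y)
  (phi_id : forall h, H h -> phi h = h)
  (Hgam : H gam) (gam_central : forall h, H h -> gam \o h = h \o gam)
  (gam_p : forall w, iter p gam w = w).

Lemma retract_conj_pow c i : K c -> i <= p -> phi (conj_pow gam p i c) = phi c.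
Proof.
move=> Kc hi; have Kgam := hHK Hgam.
rewrite /conj_pow (phiM (sgM hK (sgX hK i Kgam) Kc) (sgX hK (p - i) Kgam)).
rewrite (phiM (sgX hK i Kgam) Kc) (phi_id (sgX hH i Hgam)) (phi_id (sgX hH (p - i) Hgam)).
apply: functional_extensionality => w /=.
have comm y : gam (phi c y) = phi c (gam y).
  by have := congr1 (fun f => f y) (gam_central (phiH Kc)).
by rewrite (iter_comm _ _ comm) -iterD subnKC // gam_p.
Qed.

Lemma retract_diag c : K c -> phi (diag gam p c) = iter p (phi c).
Proof.
move=> Kc; rewrite /diag -[in RHS](size_iota 0 p).
have : all (fun i => i <= p) (iota 0 p).
  by apply/allP => i; rewrite mem_iota add0n => /ltnW.
elim: (iota 0 p) => [_|i s IH /= /andP [hi hs]]; first exact: phi_id (sg1 hH).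
have Kgam := hHK Hgam.
rewrite phiM ?retract_conj_pow ?IH //; first exact: (sg_conj_pow p i hK Kgam Kc).
by apply: (sg_foldr hK) => j _; exact: (sg_conj_pow p j hK Kgam Kc).
Qed.

End Retraction.

Section Diagonal.
Variables (m : nat -> nat) (G : afun -> Prop) (gam : afun) (p : nat) (v : vertex).
Hypotheses (hG : is_subgroup m G) (hgam : G gam) (p_pr : prime p)
  (gam_p : forall w, iter p gam w = w) (gam_v : gam v <> v).

Lemma iter_gam_aut k : is_aut m (iter k gam).
Proof. exact: (sg_aut hG (sgX hG k hgam)). Qed.

Lemma iter_gamK i w : i <= p -> iter i gam (iter (p - i) gam w) = w.
Proof. by move=> hi; rewrite -iterD subnKC. Qed.

Lemma iter_gamVK i w : i <= p -> iter (p - i) gam (iter i gam w) = w.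
Proof. by move=> hi; rewrite -iterD subnK. Qed.

Lemma prefix_orbit_uniq i j w : i < p -> j < p ->
  prefix (iter i gam v) w -> prefix (iter j gam v) w -> i = j.
Proof.
move=> hi hj iw jw; apply: (prime_orbit_inj p_pr gam_p gam_v hi hj).
by apply: (prefix_uniq_size iw jw); rewrite !(aut_size _ (iter_gam_aut _)).
Qed.

Lemma orbit_gam_preimage j : j < p -> exists2 j', j' < p & gam (iter j' gam v) = iter j gam v.
Proof.
case: j => [|j] hj; last by exists j => //; apply: ltnW.
have p_gt0 := prime_gt0 p_pr.
by exists p.-1; rewrite ?ltn_predL // -iterS prednK.
Qed.

Lemma orbit_prefix_cases w :
  (exists2 i, i < p & prefix (iter i gam v) w) \/ forall i, i < p -> ~~ prefix (iter i gam v) w.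
Proof.
case: (boolP (has (fun i => prefix (iter i gam v) w) (iota 0 p))).
  by case/hasP => i; rewrite mem_iota add0n => hi iw; left; exists i.
by move/hasPn => nw; right => i hi; apply: nw; rewrite mem_iota add0n.
Qed.

Section Conjugates.
Variable a : afun.
Hypotheses (Ga : G a) (hav : supported m a v).

Let ha : is_aut m a := sg_aut hG Ga.

Lemma conj_pow_aut i : is_aut m (conj_pow gam p i a).
Proof. exact: (aut_comp (aut_comp (iter_gam_aut i) ha) (iter_gam_aut _)). Qed.

Lemma conj_pow_supported i : i <= p -> supported m (conj_pow gam p i a) (iter i gam v).
Proof.
move=> hi w hw nw; rewrite /conj_pow /= hav ?iter_gamK //.
  exact: (aut_valid (iter_gam_aut _) hw).
apply: contra nw => vw; rewrite -(iter_gamK w hi) (aut_prefixE _ (iter_gam_aut i)) //.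
exact: (aut_valid (iter_gam_aut _) hw).
Qed.

Lemma conj_pow_p : conj_pow gam p p a = a.
Proof. by apply: functional_extensionality => w; rewrite /conj_pow /= subnn gam_p. Qed.

Lemma conj_pow0 : conj_pow gam p 0 a = a.
Proof. by apply: functional_extensionality => w; rewrite /conj_pow /= subn0 gam_p. Qed.

Lemma conj_powS i : i < p -> gam \o conj_pow gam p i a = conj_pow gam p i.+1 a \o gam.
Proof.
by move=> hi; apply: functional_extensionality => w; rewrite /conj_pow /= -iterSr subnSK.
Qed.

Lemma diag_below i w :
  i <= p -> prefix (iter i gam v) w -> diag gam p a w = conj_pow gam p i a w.
Proof.
have below j z : j < p -> prefix (iter j gam v) z -> diag gam p a z = conj_pow gam p j a z.
  move=> hj jz; rewrite /diag.
  rewrite (foldr_supported_below (m := m) (c := fun i => iter i gam v) (i := j)).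
  - by rewrite mem_iota add0n hj.
  - exact: iota_uniq.
  - move=> k; rewrite mem_iota add0n => hk; split; first exact: conj_pow_aut.
    exact: (conj_pow_supported (ltnW hk)).
  - move=> k z'; rewrite mem_iota add0n => hk jz' kz'.
    exact: (prefix_orbit_uniq hk hj kz' jz').
  - exact: jz.
rewrite leq_eqVlt => /orP [/eqP ->|hi] iw; last exact: below.
rewrite conj_pow_p -[in RHS]conj_pow0; apply: below (prime_gt0 p_pr) _.
by rewrite gam_p in iw.
Qed.

Lemma diag_outside w :
  (forall i, i < p -> ~~ prefix (iter i gam v) w) -> diag gam p a w = w.
Proof.
move=> nw; apply: (foldr_supported_outside (m := m) (c := fun i => iter i gam v)).
move=> i /In_mem; rewrite mem_iota add0n => hi; split; first exact: conj_pow_aut.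
by split; [apply: (conj_pow_supported (ltnW hi)) | apply: nw].
Qed.

Lemma restr_diag : restr v (diag gam p a) = a.
Proof.
rewrite -{2}(restr_supported ha hav); apply: functional_extensionality => w.
by rewrite /restr; case: ifP => // vw; rewrite (diag_below (leq0n p) vw) conj_pow0.
Qed.

Lemma diag_commute_gam : gam \o diag gam p a = diag gam p a \o gam.
Proof.
have ga := sg_aut hG hgam; have da := sg_aut hG (sg_diag p hG hgam Ga).
apply: functional_extensionality => w /=.
case: (classic (valid m w)) => hw; last by rewrite !(aut_outside _ hw) // (aut_outside ga hw).
case: (orbit_prefix_cases w) => [[i hi iw]|nw].
  have iw' : prefix (iter i.+1 gam v) (gam w) by rewrite iterS (aut_prefixE _ ga hw).
  rewrite (diag_below (ltnW hi) iw) (diag_below hi iw').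
  by rewrite -[LHS]/((gam \o conj_pow gam p i a) w) conj_powS.
have nw' j : j < p -> ~~ prefix (iter j gam v) (gam w).
  by move=> hj; have [j' hj' <-] := orbit_gam_preimage hj; rewrite (aut_prefixE _ ga hw) nw.
by rewrite !diag_outside.
Qed.

Lemma diag_fix : diag gam p a v = v.
Proof. by rewrite (diag_below (leq0n p) (prefix_refl v)) conj_pow0 (supported_fix ha hav). Qed.

End Conjugates.

Lemma diagM a b : G a -> supported m a v -> G b -> supported m b v ->
  diag gam p (a \o b) = diag gam p a \o diag gam p b.
Proof.
move=> Ga hav Gb hbv; apply: functional_extensionality => w /=.
have Gab := sgM hG Ga Gb; have habv := supported_comp hav hbv.
case: (orbit_prefix_cases w) => [[i hi iw]|nw]; last by rewrite !diag_outside.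
have ibw := supported_prefix (conj_pow_aut Gb i) (conj_pow_supported hbv (ltnW hi)) iw.
rewrite !(diag_below _ _ (ltnW hi)) //.
by rewrite /conj_pow /= iter_gamVK // ltnW.
Qed.

Lemma diag_id : diag gam p idf = idf.
Proof.
have G1 := sg1 hG; have sup1 : supported m idf v by [].
apply: functional_extensionality => w.
case: (orbit_prefix_cases w) => [[i hi iw]|nw]; last by rewrite diag_outside.
by rewrite (diag_below G1 sup1 (ltnW hi) iw) /conj_pow /= iter_gamK // ltnW.
Qed.

Lemma diag_commute a b : G a -> supported m a v -> G b -> supported m b v ->
  diag gam p a \o diag gam p b = diag gam p b \o diag gam p a -> a \o b = b \o a.
Proof.
move=> Ga hav Gb hbv e.
have restr_diagM x y : G x -> supported m x v -> G y -> supported m y v ->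
    x \o y = restr v (diag gam p x \o diag gam p y).
  move=> Gx hxv Gy hyv.
  have diag_y := sg_aut hG (sg_diag p hG hgam Gy).
  by rewrite (restrM (m := m) _ diag_y (diag_fix Gy hyv)) !restr_diag.
by rewrite (restr_diagM a b) // e -restr_diagM.
Qed.

Lemma conj_pow_commute a b i : G a -> supported m a v -> G b -> supported m b v ->
  0 < i < p -> a \o conj_pow gam p i b = conj_pow gam p i b \o a.
Proof.
move=> Ga hav Gb hbv /andP [i_gt0 hi].
have neq : v != iter i gam v.
  apply/eqP => /(prime_orbit_inj p_pr gam_p gam_v (prime_gt0 p_pr) hi) e.
  by rewrite -e in i_gt0.
have same_size : size v = size (iter i gam v) by rewrite (aut_size _ (iter_gam_aut i)).
apply: (supported_commute (sg_aut hG Ga) (conj_pow_aut Gb i) hav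
  (conj_pow_supported hbv (ltnW hi))).
  by apply: contra neq => /eq_prefix_size/(_ same_size)/eqP.
by apply: contra neq => /eq_prefix_size/(_ (esym same_size))/eqP; rewrite eq_sym.
Qed.

Section Obstruction.
Variable S : seq afun.
Hypotheses (SP : forall s, List.In s S -> stab_restr G v s)
  (PS : forall f, stab_restr G v f -> gen (fun s => List.In s S) f).

Let H := gen (fun s => List.In s (diag_gens gam p v S)).

Lemma diag_gens_G s : List.In s (diag_gens gam p v S) -> G s.
Proof.
case=> [<- //|/List.in_map_iff [x [<- /SP [_ _ Gx]]]].
exact: (sg_diag p hG hgam Gx).
Qed.

Lemma gen_diag_subgroup : is_subgroup m H.
Proof. exact: (gen_subgroup hG diag_gens_G). Qed.

Lemma gen_diag_central h : H h -> gam \o h = h \o gam.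
Proof.
apply: gen_centralize => s [<- //|/List.in_map_iff [x [<- /SP [_ _ Gx]]]].
exact: (diag_commute_gam Gx (supported_restr x)).
Qed.

Lemma gen_diag_rist x : rist m G v x -> H (diag gam p x).
Proof.
move=> /(rist_stab_restr hG) [Px <-].
apply: (gen_morph (P := stab_restr G v) (phi := fun y => diag gam p (restr v y))
  (stab_restr_subgroup v hG) gen_diag_subgroup _ _ _ (PS Px)).
- by rewrite restr_id diag_id.
- move=> y z [Gy yv Gy'] [Gz zv Gz'].
  rewrite (restrM (m := m) _ (sg_aut hG Gz) zv).
  exact: (diagM Gy' (supported_restr y) Gz' (supported_restr z)).
move=> s hs; split; first exact: SP.
by apply: gen_gens; right; apply: (List.in_map (fun s => diag gam p (restr v s))).
Qed.

Variables (K : afun -> Prop) (phi : afun -> afun).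
Hypotheses (hK : is_subgroup m K) (hHK : Defs.subset H K)
  (phiH : forall x, K x -> H (phi x))
  (phiM : forall x y, K x -> K y -> phi (x \o y) = phi x \o phi y)
  (phi_id : forall h, H h -> phi h = h).

Lemma retract_rist_commute a b : K a -> K b -> rist m G v a -> rist m G v b ->
  a \o b = b \o a.
Proof.
move=> Ka Kb [Ga hav] [Gb hbv].
have Hgam : H gam by apply: gen_gens; left.
have retract_conj := retract_conj_pow hK gen_diag_subgroup hHK phiH phiM phi_id
  Hgam gen_diag_central gam_p.
have retract_diag c : K c -> rist m G v c -> diag gam p c = iter p (phi c).
  move=> Kc rc; rewrite -(retract_diag hK gen_diag_subgroup hHK phiH phiM phi_id
    Hgam gen_diag_central gam_p Kc).
  by rewrite phi_id //; apply: gen_diag_rist.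
have p_gt1 := prime_gt1 p_pr.
have phi_ab : phi a \o phi b = phi b \o phi a.
  have Kb1 : K (conj_pow gam p 1 b) := sg_conj_pow p 1 hK (hHK Hgam) Kb.
  rewrite -(retract_conj b 1 Kb (ltnW p_gt1)) -(phiM Ka Kb1) -(phiM Kb1 Ka).
  by rewrite (conj_pow_commute Ga hav Gb hbv) // p_gt1.
apply: (diag_commute Ga hav Gb hbv).
rewrite (retract_diag a Ka (conj Ga hav)) (retract_diag b Kb (conj Gb hbv)).
apply: functional_extensionality => w /=.
have comm y : phi a (phi b y) = phi b (phi a y) by have := congr1 (fun f => f y) phi_ab.
by rewrite iter_comm // => y; rewrite -!iter_comm.
Qed.

End Obstruction.

End Diagonal.

Theorem lemma3p2 (m : nat -> nat) (G : afun -> Prop) :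
  (forall n, 2 <= m n) ->
  is_subgroup m G ->
  fin_gen G ->
  branch m G ->
  (exists g, [/\ G g, (exists v, g v <> v)
                & exists n, 0 < n /\ forall v, iter n g v = v]) ->
  ~ LR m G.
Proof.
move=> hm hG [l hl] hB [g [Gg g_moved g_fin]] hLR.
have [gam [p [v [hgam p_pr gam_p hv gam_v]]]] := prime_order_elt hG Gg g_moved g_fin.
have stab_sub : Defs.subset (stab_restr G v) G by move=> x [].
have [S [SP PS]] := finite_index_fin_gen hG hl (stab_restr_subgroup v hG) stab_sub
  (stab_restr_finite_index hG hv hB).
have [K [phi [[hK hKG hHK hKfi] [phiH phiM phi_id]]]] :=
  hLR _ (diag_gens_G (p := p) hG hgam SP).
have [a [b [[Ka ra] [Kb rb] nab]]] := finite_index_rist_noncommuting hm hG hB hK hKG hKfi hv.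
exact: nab (retract_rist_commute hG hgam p_pr gam_p gam_v SP PS hK hHK phiH phiM phi_id
  Ka Kb ra rb).
Qed.
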